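(* Let $n\ge2$ and let $\Gamma$ be a set of $2n$ points in $\mathbb{P}^{n-1}$ such that the cone $L_{2n}^n\subset\mathbb{A}^n$ over $\Gamma$ is Gorenstein, every $n$ of the points span $\mathbb{P}^{n-1}$, and every $2n-1$ of the points impose independent conditions on quadrics. Then $T^1_\ell(L_{2n}^n)=0$ for all $\ell>0$; that is, $L_{2n}^n$ has no nontrivial infinitesimal deformations of positive weight.
   Context: Ground field $\k$ algebraically closed, characteristic $0$. $T^1=\operatorname{Coker}\big(\Theta_n\otimes\mathcal{O}\to\operatorname{Hom}_{\mathcal{O}_n}(I,\mathcal{O})\big)$ for the homogeneous ideal $I$ of the cone (all variables of weight $1$), graded so that $T^1_\ell$ is the image of homomorphisms sending each homogeneous generator of degree $q$ to an element of degree $q+\ell$. *)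

From HB Require Import structures.
From mathcomp Require Import all_boot all_order all_algebra.
From mathcomp Require Import mpoly.
Set Implicit Arguments. Unset Strict Implicit. Unset Printing Implicit Defensive.
Import GRing.Theory.
Local Open Scope ring_scope.

Section Cone.
Variables (k : fieldType) (n N : nat).
(* N points of P^{n-1}, given by representative vectors v i in k^n. *)
Variable v : 'I_N -> 'I_n -> k.

Definition in_coneI (f : {mpoly k[n]}) : Prop :=
  forall (i : 'I_N) (t : k), f.@[fun j => t * v i j] = 0.

Definition distinct_points : Prop :=
  (forall i, exists j, v i j != 0) /\
  (forall i i' : 'I_N, i != i' -> forall t : k, exists j, v i j != t * v i' j).

Definition every_n_span : Prop :=
  forall s : 'I_n -> 'I_N, injective s ->
    \det (\matrix_(a < n, b < n) v (s a) b) != 0.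

(* every N-1 of the points impose independent conditions on quadrics:
   evaluation of quadratic forms at the points other than i is surjective *)
Definition indep_on_quadrics_but_one : Prop :=
  forall (i : 'I_N) (c : 'I_N -> k), exists q : {mpoly k[n]},
    q \is 2.-homog /\ forall j, j != i -> q.@[v j] = c j.

(* The cone over the points is Gorenstein: its homogeneous coordinate ring
   O = k[x]/I (reduced, of dimension 1) is Cohen-Macaulay of type 1, i.e.
   there is a linear form lam which is a nonzerodivisor on O and the socle
   of the Artinian ring O/(lam) is one-dimensional over k. *)
Definition in_coneI_lam (lam g : {mpoly k[n]}) : Prop :=
  exists f a, in_coneI f /\ g = f + a * lam.

Definition cone_Gorenstein : Prop :=
  exists lam : {mpoly k[n]},
    lam \is 1.-homog /\
    (forall f, in_coneI (lam * f) -> in_coneI f) /\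
    exists s : {mpoly k[n]},
      ~ in_coneI_lam lam s /\
      (forall j : 'I_n, in_coneI_lam lam ('X_j * s)) /\
      (forall g : {mpoly k[n]}, (forall j : 'I_n, in_coneI_lam lam ('X_j * g)) ->
         exists c : k, in_coneI_lam lam (g - c *: s)).

(* Elements of Hom_{O_n}(I, O): maps phi on I with values read modulo I,
   O_n-linear modulo I. *)
Definition is_hom_I_O (phi : {mpoly k[n]} -> {mpoly k[n]}) : Prop :=
  forall a b f g : {mpoly k[n]}, in_coneI f -> in_coneI g ->
    in_coneI (phi (a * f + b * g) - (a * phi f + b * phi g)).

Definition hom_of_weight (l : nat) (phi : {mpoly k[n]} -> {mpoly k[n]}) : Prop :=
  forall (q : nat) (f : {mpoly k[n]}), in_coneI f -> f \is q.-homog ->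
    exists h : {mpoly k[n]}, h \is (q + l)%N.-homog /\ in_coneI (phi f - h).

(* phi lies in the image of Theta_n (x) O -> Hom(I, O), i.e. it is induced
   by a derivation sum_j g_j d/dx_j *)
Definition from_derivation (phi : {mpoly k[n]} -> {mpoly k[n]}) : Prop :=
  exists g : 'I_n -> {mpoly k[n]}, forall f : {mpoly k[n]}, in_coneI f ->
    in_coneI (phi f - \sum_(j < n) g j * mderiv j f).

Definition T1_vanishes (l : nat) : Prop :=
  forall phi, is_hom_I_O phi -> hom_of_weight l phi -> from_derivation phi.
End Cone.

From HB Require Import structures.
From mathcomp Require Import all_boot all_order all_algebra.
From mathcomp Require Import mpoly.
From mathcomp Require Import ring zify.
Set Implicit Arguments. Unset Strict Implicit. Unset Printing Implicit Defensive.
Import GRing.Theory.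
Local Open Scope ring_scope.

(* Because the points are reduced, a homomorphism phi : I -> O of weight l is
   determined on homogeneous elements by the values (phi f)(v_i).  Writing a
   homogeneous f in I as sum_j (x_j - u_j x_r) H_j with u proportional to v_i,
   and multiplying by a form e that is 1 at v_i and vanishes at the other
   points, shows that f |-> (phi f)(v_i) is a derivation at v_i:
   (phi f)(v_i) = sum_l c_il (d_l f)(v_i), where c_i only matters up to
   multiples of v_i (Euler's formula).  Hence phi is induced by sum_l g_l d_l as
   soon as the forms g_l of degree l + 1 satisfy g_l(v_i) = c_il + mu_i v_il.
   To build them, write c_i in terms of n other points v_p, and use quadrics
   that are 1 at v_i and vanish at all points except v_i and v_p, times a power
   of a linear form: at v_p they only contribute a multiple of v_p.  Quadrics
   have degree 2 <= l + 1, which is where l > 0 is used. *)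

Section HomogeneousForms.
Variables (k : fieldType) (n : nat).
Implicit Types (p f : {mpoly k[n]}) (x : 'I_n -> k).

Lemma meval_dhomog_scale d p (t : k) x : p \is d.-homog ->
  p.@[fun j => t * x j] = t ^+ d * p.@[x].
Proof.
move=> Hp; rewrite !mevalE mulr_sumr big_seq [RHS]big_seq; apply: eq_bigr => m Hm.
rewrite (eq_bigr _ (fun j _ => exprMn _ _ _)) big_split /= prodrXr -mdegE.
by rewrite (dhomog_mf Hp Hm) mulrCA.
Qed.

Lemma mdegDU m (j : 'I_n) : mdeg (m + U_(j))%MM = (mdeg m).+1.
Proof. by rewrite mdegD mdeg1 addn1. Qed.

Lemma mderiv_dhomog d p (j : 'I_n) : p \is d.-homog -> mderiv j p \is d.-1.-homog.
Proof.
move=> /dhomogP Hp; apply/dhomogP => m; rewrite mcoeff_msupp mcoeff_mderiv.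
have [/Hp <- _|/memN_msupp_eq0 ->] := boolP (m + U_(j) \in msupp p)%MM.
  by change (mdeg m = (mdeg (m + U_(j))%MM).-1); rewrite mdegDU.
by rewrite mul0rn eqxx.
Qed.

Lemma mderiv_dhomog0 p (j : 'I_n) : p \is 0.-homog -> mderiv j p = 0.
Proof.
move=> Hp; apply/mpolyP => m; rewrite mcoeff_mderiv mcoeff0.
by rewrite (dhomog_nemf_coeff Hp) ?mul0rn //= mdegDU.
Qed.

Definition derivation (g : 'I_n -> {mpoly k[n]}) p := \sum_(j < n) g j * mderiv j p.

Lemma dhomog_derivation e d (g : 'I_n -> {mpoly k[n]}) p :
  (forall j, g j \is e.+1.-homog) -> p \is d.-homog -> derivation g p \is (e + d).-homog.
Proof.
move=> g_homog p_homog; apply: rpred_sum => j _.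
case: d p_homog => [|d] p_homog; first by rewrite mderiv_dhomog0 // mulr0 rpred0.
by rewrite -addSnnS; apply: dhomogM (g_homog j) (mderiv_dhomog j p_homog).
Qed.

Lemma mderivXU (i j : 'I_n) : mderiv j ('X_i : {mpoly k[n]}) = (i == j)%:R.
Proof.
rewrite mderivX mnm1E; case: eqP => [->|_]; last by rewrite scale0r.
by rewrite -{1}[U_(j)%MM]add0m addmK mpolyX0 scale1r.
Qed.

Hypothesis pchar0 : [pchar k] =i pred0.

Lemma pchar0_poly_eq0 (P : {poly k}) : (forall t, P.[t] = 0) -> P = 0.
Proof.
move=> HP; apply: (@roots_geq_poly_eq0 _ _ [seq i%:R | i <- iota 0 (size P)]).
- by apply/allP => _ /mapP [i _ ->]; apply/eqP/HP.
- rewrite map_inj_in_uniq ?iota_uniq // => i j _ _.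
  wlog lij : i j / (i <= j)%N => [W|Eij].
    by case/orP: (leq_total i j) => /W W' E; [apply: W' | apply/esym/W'].
  apply/eqP; rewrite eqn_leq lij /= -subn_eq0 -((pcharf0P _).1 pchar0).
  by rewrite natrB // Eij subrr.
- by rewrite size_map size_iota.
Qed.

Lemma meval_pihomog_eq0 f x :
  (forall t : k, f.@[fun j => t * x j] = 0) ->
  forall d, (pihomog mdeg d f).@[x] = 0.
Proof.
move=> Hf d; pose K := maxn (msize f) d.+1.
pose P := \poly_(e < K) (pihomog mdeg e f).@[x].
have P0 : P = 0.
  apply: pchar0_poly_eq0 => t; rewrite horner_poly -[X in _ = X](Hf t).
  rewrite [in RHS](pihomog_partitionE (leq_maxl (msize f) d.+1)) raddf_sum /=.
  by apply: eq_bigr => e _; rewrite (meval_dhomog_scale _ _ (pihomogP _ _ _)) mulrC.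
have := congr1 (fun P : {poly k} => P`_d) P0.
by rewrite coef_poly coef0 leq_max ltnSn orbT.
Qed.

End HomogeneousForms.

Lemma sum_mul_delta (R : pzSemiRingType) m (F : 'I_m -> R) (j : 'I_m) :
  \sum_(l < m) F l * (j == l)%:R = F j.
Proof.
rewrite (bigD1 j) //= eqxx mulr1 big1 ?addr0 // => l Hl.
by rewrite eq_sym (negbTE Hl) mulr0.
Qed.

Section LineIdeal.
Variables (k : fieldType) (n : nat) (u : 'I_n -> k) (r : 'I_n).
Implicit Types (p q a b c d : {mpoly k[n]}).

Definition line_gen j : {mpoly k[n]} := 'X_j - u j *: 'X_r.

Definition in_line_ideal p :=
  exists H : 'I_n -> {mpoly k[n]}, p = \sum_j line_gen j * H j.

Lemma in_line_ideal0 : in_line_ideal 0.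
Proof. by exists (fun _ => 0); rewrite big1 // => j _; rewrite mulr0. Qed.

Lemma in_line_idealD p q : in_line_ideal p -> in_line_ideal q -> in_line_ideal (p + q).
Proof.
move=> [H ->] [G ->]; exists (fun j => H j + G j).
by rewrite -big_split /=; apply: eq_bigr => j _; rewrite mulrDr.
Qed.

Lemma in_line_idealMr p q : in_line_ideal p -> in_line_ideal (p * q).
Proof.
move=> [H ->]; exists (fun j => H j * q).
by rewrite mulr_suml; apply: eq_bigr => j _; rewrite mulrA.
Qed.

Lemma in_line_idealMl p q : in_line_ideal p -> in_line_ideal (q * p).
Proof. by rewrite mulrC; apply: in_line_idealMr. Qed.

Lemma in_line_ideal_gen j : in_line_ideal (line_gen j).
Proof. by exists (fun l => (j == l)%:R); rewrite sum_mul_delta. Qed.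

Lemma in_line_idealBM a b c d : in_line_ideal (a - b) -> in_line_ideal (c - d) ->
  in_line_ideal (a * c - b * d).
Proof.
move=> Hab Hcd; have -> : a * c - b * d = (a - b) * c + b * (c - d).
  by rewrite mulrBl mulrBr addrA subrK.
by apply: in_line_idealD; [apply: in_line_idealMr | apply: in_line_idealMl].
Qed.

Lemma in_line_ideal_monomial m :
  in_line_ideal ('X_[m] - (\prod_(i < n) u i ^+ m i) *: 'X_r ^+ mdeg m).
Proof.
rewrite mpolyXE_id mdegE -prodrXr -scaler_prod.
apply: (big_ind2 (fun a b => in_line_ideal (a - b))) => [||i _].
- by rewrite subrr; apply: in_line_ideal0.
- by move=> ? ? ? ?; apply: in_line_idealBM.
rewrite -exprZn; elim: (m i) => [|e IHe].
  by rewrite !expr0 subrr; apply: in_line_ideal0.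
by rewrite !exprS; apply: in_line_idealBM => //; apply: in_line_ideal_gen.
Qed.

Lemma in_line_ideal_dhomog e p : p \is e.-homog ->
  in_line_ideal (p - p.@[u] *: 'X_r ^+ e).
Proof.
move=> Hp; rewrite {1}[p]mpolyE mevalE scaler_suml -sumrB big_seq.
apply: big_ind => [|? ?|m Hm]; [exact: in_line_ideal0 | exact: in_line_idealD |].
rewrite -scalerA -scalerBr -[_ *: (_ - _)]mul_mpolyC; apply: in_line_idealMl.
by rewrite -(dhomog_mf Hp Hm); apply: in_line_ideal_monomial.
Qed.

End LineIdeal.

Section ConeIdeal.
Variables (k : fieldType) (n N : nat) (v : 'I_N -> 'I_n -> k).
Implicit Types (f g a b : {mpoly k[n]}).
Local Notation coneI := (in_coneI v).

Lemma coneI_meval f i : coneI f -> f.@[v i] = 0.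
Proof.
by move=> /(_ i 1); rewrite (@meval_eq _ _ _ (v i)) // => j; rewrite mul1r.
Qed.

Lemma coneI_dhomog d f : f \is d.-homog -> (forall i, f.@[v i] = 0) -> coneI f.
Proof. by move=> Hf H i t; rewrite (meval_dhomog_scale _ _ Hf) H mulr0. Qed.

Lemma coneI0 : coneI 0.
Proof. by move=> i t; rewrite meval0. Qed.

Lemma coneI_comb a b f g : coneI f -> coneI g -> coneI (a * f + b * g).
Proof. by move=> Hf Hg i t; rewrite mevalD !mevalM Hf Hg !mulr0 addr0. Qed.

Lemma coneID f g : coneI f -> coneI g -> coneI (f + g).
Proof. by move=> Hf Hg; rewrite -[f]mul1r -[g]mul1r; apply: coneI_comb. Qed.

Lemma coneI_pihomog d f :
  [pchar k] =i pred0 -> coneI f -> coneI (pihomog mdeg d f).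
Proof.
move=> pchar0 Hf; apply: (coneI_dhomog (pihomogP _ _ _)) => i.
by apply: meval_pihomog_eq0 => // t; apply: Hf.
Qed.

End ConeIdeal.

Section PointValues.
Variables (k : fieldType) (n N : nat) (v : 'I_N -> 'I_n -> k).
Variable phi : {mpoly k[n]} -> {mpoly k[n]}.
Hypothesis phi_hom : is_hom_I_O v phi.
Implicit Types (f g a b : {mpoly k[n]}).
Local Notation coneI := (in_coneI v).

Definition phi_at i f := (phi f).@[v i].

Lemma phi_at_comb i a b f g : coneI f -> coneI g ->
  phi_at i (a * f + b * g) = a.@[v i] * phi_at i f + b.@[v i] * phi_at i g.
Proof.
move=> Hf Hg; have /eqP := coneI_meval i (phi_hom a b Hf Hg).
by rewrite mevalB mevalD !mevalM subr_eq0 => /eqP.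
Qed.

Lemma phi_atMl i a f : coneI f -> phi_at i (a * f) = a.@[v i] * phi_at i f.
Proof.
move=> Hf; have := phi_at_comb i a 0 Hf Hf.
by rewrite mul0r addr0 meval0 mul0r addr0.
Qed.

Lemma phi_at0 i : phi_at i 0 = 0.
Proof. by have := phi_atMl i 0 (coneI0 v); rewrite mul0r meval0 mul0r. Qed.

Lemma phi_at_sum i (F G : 'I_n -> {mpoly k[n]}) : (forall j, coneI (G j)) ->
  phi_at i (\sum_j F j * G j) = \sum_j (F j).@[v i] * phi_at i (G j).
Proof.
move=> HG; suff [] : coneI (\sum_j F j * G j) /\
    phi_at i (\sum_j F j * G j) = \sum_j (F j).@[v i] * phi_at i (G j) by [].
apply: (big_rec2 (fun y1 y2 => coneI y1 /\ phi_at i y1 = y2)).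
  by split; [apply: coneI0 | apply: phi_at0].
move=> j y1 y2 _ [Hy <-]; rewrite -{1 2}[y1]mul1r.
by split; [apply: coneI_comb | rewrite phi_at_comb // meval1 mul1r].
Qed.

Variables (i : 'I_N) (r : 'I_n) (e : {mpoly k[n]}) (de : nat).
Hypotheses (vir_neq0 : v i r != 0) (e_homog : e \is de.-homog)
  (e_at_i : e.@[v i] = 1) (e_off_i : forall p, p != i -> e.@[v p] = 0).

Let u j := v i j / v i r.

Definition normal_coef j := phi_at i (line_gen u r j * e).

Lemma line_gen_meval j : (line_gen u r j).@[v i] = 0.
Proof. by rewrite mevalB mevalZ !mevalXU /u divfK // subrr. Qed.

Lemma coneI_line_gen_mul j : coneI (line_gen u r j * e).
Proof.
apply: (@coneI_dhomog _ _ _ _ (1 + de)).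
  by apply: dhomogM e_homog; rewrite rpredB ?rpredZ // dhomogX /= mdeg1.
move=> p; rewrite mevalM; have [->|/e_off_i ->] := eqVneq p i.
  by rewrite line_gen_meval mul0r.
by rewrite mulr0.
Qed.

Lemma normal_coef_r : normal_coef r = 0.
Proof.
by rewrite /normal_coef /line_gen /u divff // scale1r subrr mul0r phi_at0.
Qed.

Lemma phi_at_derivation d f (mu : k) : f \is d.-homog -> coneI f ->
  phi_at i f = \sum_(l < n) (normal_coef l + mu * v i l) * (mderiv l f).@[v i].
Proof.
move=> Hf If; have [H f_dec] := in_line_ideal_dhomog u r Hf.
have f_u0 : f.@[u] = 0.
  rewrite (@meval_eq _ _ _ (fun j => (v i r)^-1 * v i j)); last first.
    by move=> j; rewrite /u mulrC.
  by rewrite (meval_dhomog_scale _ _ Hf) coneI_meval // mulr0.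
rewrite f_u0 scale0r subr0 in f_dec.
have phi_at_f : phi_at i f = \sum_j (H j).@[v i] * normal_coef j.
  rewrite -[phi_at i f]mul1r -e_at_i -phi_atMl //.
  have -> : e * f = \sum_j H j * (line_gen u r j * e).
    by rewrite f_dec mulr_sumr; apply: eq_bigr => j _; ring.
  by rewrite phi_at_sum //; apply: coneI_line_gen_mul.
have df_at l : (mderiv l f).@[v i] =
    \sum_j ((j == l)%:R - u j * (r == l)%:R) * (H j).@[v i].
  rewrite f_dec (raddf_sum (mderiv l)) (raddf_sum (meval (v i))) /=.
  apply: eq_bigr => j _.
  rewrite mderivM mevalD !mevalM line_gen_meval mul0r addr0.
  by rewrite mderivB mderivZ !mderivXU mevalB mevalZ !rmorph_nat.
rewrite phi_at_f (eq_bigr _ (fun l _ => congr1 _ (df_at l))).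
under eq_bigr do rewrite mulr_sumr.
rewrite exchange_big /=; apply: eq_bigr => j _.
under eq_bigr do rewrite mulrA.
rewrite -mulr_suml mulrC; congr (_ * _).
under eq_bigr do rewrite mulrBr mulrCA.
rewrite sumrB -mulr_sumr !sum_mul_delta normal_coef_r add0r.
by rewrite /u mulrCA divfK // addrK.
Qed.

End PointValues.

Section Interpolation.
Variables (k : fieldType) (n N : nat) (v : 'I_N -> 'I_n -> k).
Hypothesis v_quad : indep_on_quadrics_but_one v.

Lemma separating_quadric (i p : 'I_N) : p != i -> exists Z : {mpoly k[n]},
  [/\ Z \is 2.-homog, Z.@[v i] = 1 & forall j, j != i -> j != p -> Z.@[v j] = 0].
Proof.
move=> p_neq_i; have [Z [Z_homog Z_at]] := v_quad p (fun j => (j == i)%:R).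
exists Z; split=> [//||j j_neq_i j_neq_p]; first by rewrite Z_at ?eqxx // eq_sym.
by rewrite Z_at // (negbTE j_neq_i).
Qed.

Lemma point_indicator (i : 'I_N) : (2 < N)%N -> exists e : {mpoly k[n]},
  [/\ e \is 4.-homog, e.@[v i] = 1 & forall p, p != i -> e.@[v p] = 0].
Proof.
move=> N_gt2; have lt0 : (0 < N.-1)%N by lia.
have lt1 : (1 < N.-1)%N by lia.
pose p0 := lift i (Ordinal lt0); pose p1 := lift i (Ordinal lt1).
have p0_neq_i : p0 != i by rewrite eq_sym neq_lift.
have p1_neq_i : p1 != i by rewrite eq_sym neq_lift.
have [Z0 [Z0_homog Z0_i Z0_off]] := separating_quadric p0_neq_i.
have [Z1 [Z1_homog Z1_i Z1_off]] := separating_quadric p1_neq_i.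
exists (Z0 * Z1); split; first exact: (dhomogM Z0_homog Z1_homog).
  by rewrite mevalM Z0_i Z1_i mulr1.
move=> p p_neq_i; rewrite mevalM; have [->|p_neq_p0] := eqVneq p p0.
  by rewrite Z1_off ?mulr0 // (inj_eq (@lift_inj _ i)).
by rewrite Z0_off ?mul0r.
Qed.

Lemma other_points (i : 'I_N) : (n < N)%N ->
  exists s : 'I_n -> 'I_N, injective s /\ forall a, s a != i.
Proof.
move=> n_lt_N; have n_le : (n <= N.-1)%N by lia.
exists (fun a => lift i (widen_ord n_le a)); split=> [a b /lift_inj E|a].
  by apply: val_inj; have /= := congr1 val E.
by rewrite eq_sym neq_lift.
Qed.

Hypothesis v_span : every_n_span v.

Lemma span_coords (s : 'I_n -> 'I_N) (c : 'I_n -> k) : injective s ->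
  exists beta : 'I_n -> k, forall l, \sum_a beta a * v (s a) l = c l.
Proof.
move=> s_inj; pose M := \matrix_(a < n, b < n) v (s a) b.
have M_unit : M \in unitmx by rewrite unitmxE unitfE; apply: v_span.
exists (fun a => ((\row_b c b) *m invmx M) 0 a) => l.
have := congr1 (fun A : 'rV_n => A 0 l) (mulmxKV M_unit (\row_b c b)).
rewrite /= mxE => <-; rewrite mxE.
by apply: eq_bigr => a _; rewrite [M a l]mxE.
Qed.

Lemma local_interpolant (i : 'I_N) (r : 'I_n) (c : 'I_n -> k) (l0 : nat) :
  (n < N)%N -> v i r != 0 -> exists (G : 'I_n -> {mpoly k[n]}) (mu : 'I_N -> k),
  [/\ forall l, G l \is l0.+2.-homog, forall l, (G l).@[v i] = c l &
      forall j, j != i -> forall l, (G l).@[v j] = mu j * v j l].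
Proof.
move=> n_lt_N vir_neq0; have [s [s_inj s_neq_i]] := other_points i n_lt_N.
have /fin_all_exists [Z Z_prop] a : exists Z : {mpoly k[n]},
    [/\ Z \is 2.-homog, Z.@[v i] = 1 & forall j, j != i -> j != s a -> Z.@[v j] = 0].
  exact: separating_quadric.
have [beta beta_c] := span_coords c s_inj.
(* At v j with j != i only the summands with s a = j survive, and they are
   multiples of v j. *)
pose y : {mpoly k[n]} := ((v i r)^-1 *: 'X_r) ^+ l0.
have y_homog : y \is l0.-homog.
  by rewrite -[l0]mul1n dhomogMn // dhomogZ // dhomogX /= mdeg1.
have y_at_i : y.@[v i] = 1 by rewrite rmorphXn /= mevalZ mevalXU mulVf // expr1n.
exists (fun l => \sum_a (beta a * v (s a) l) *: (Z a * y)).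
exists (fun j => \sum_a (if s a == j then beta a * (Z a * y).@[v j] else 0)).
split=> [l|l|j j_neq_i l].
- apply: rpred_sum => a _; apply: rpredZ; rewrite -[l0.+2]/(2 + l0)%N.
  by apply: dhomogM y_homog; case: (Z_prop a).
- rewrite -beta_c raddf_sum /=; apply: eq_bigr => a _.
  by case: (Z_prop a) => _ Z_i _; rewrite mevalZ mevalM Z_i y_at_i !mulr1.
rewrite raddf_sum mulr_suml /=; apply: eq_bigr => a _; rewrite mevalZ.
have [<-|sa_neq_j] := eqVneq (s a) j; first by rewrite mulrAC.
case: (Z_prop a) => _ _ Z_off.
by rewrite mevalM Z_off // 1?eq_sym // !(mul0r, mulr0).
Qed.

Lemma interpolant (c : 'I_N -> 'I_n -> k) (l0 : nat) :
  (n < N)%N -> (forall i, exists r, v i r != 0) ->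
  exists g : 'I_n -> {mpoly k[n]}, (forall l, g l \is l0.+2.-homog) /\
    forall j, exists mu : k, forall l, (g l).@[v j] = c j l + mu * v j l.
Proof.
move=> n_lt_N v_neq0.
have /fin_all_exists [Gmu Gmu_prop] i :
    exists Gm : ('I_n -> {mpoly k[n]}) * ('I_N -> k),
    [/\ forall l, Gm.1 l \is l0.+2.-homog, forall l, (Gm.1 l).@[v i] = c i l &
        forall j, j != i -> forall l, (Gm.1 l).@[v j] = Gm.2 j * v j l].
  have [r vir_neq0] := v_neq0 i.
  by have [G [mu ?]] := local_interpolant (c i) l0 n_lt_N vir_neq0; exists (G, mu).
exists (fun l => \sum_i (Gmu i).1 l); split=> [l|j].
  by apply: rpred_sum => i _; case: (Gmu_prop i) => /(_ l).
exists (\sum_(i | i != j) (Gmu i).2 j) => l.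
rewrite raddf_sum (bigD1 j) //= mulr_suml.
case: (Gmu_prop j) => _ -> _; congr (_ + _); apply: eq_bigr => i i_neq_j.
by case: (Gmu_prop i) => _ _ ->; rewrite 1?eq_sym.
Qed.

End Interpolation.

Section PositiveWeight.
Variables (k : fieldType) (n N : nat) (v : 'I_N -> 'I_n -> k).
Hypothesis pchar0 : [pchar k] =i pred0.
Variable phi : {mpoly k[n]} -> {mpoly k[n]}.
Hypothesis phi_hom : is_hom_I_O v phi.
Local Notation coneI := (in_coneI v).

Lemma coneI_phi_sum K (F : 'I_K -> {mpoly k[n]}) : (forall d, coneI (F d)) ->
  coneI (phi (\sum_d F d) - \sum_d phi (F d)).
Proof.
move=> F_in; suff [] : coneI (\sum_d F d) /\
    coneI (phi (\sum_d F d) - \sum_d phi (F d)) by [].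
apply: (big_rec2 (fun y1 y2 => coneI y1 /\ coneI (phi y1 - y2))).
  split; first exact: coneI0.
  by have := phi_hom 0 0 (coneI0 v) (coneI0 v); rewrite !mul0r !addr0 subr0.
move=> d y1 y2 _ [y1_in y12_in]; split; first exact: coneID.
have := coneID (phi_hom 1 1 (F_in d) y1_in) y12_in; rewrite !mul1r.
by congr in_coneI; ring.
Qed.

Lemma from_derivation_dhomog g :
  (forall d f, coneI f -> f \is d.-homog -> coneI (phi f - derivation g f)) ->
  from_derivation v phi.
Proof.
move=> g_der; exists g => f f_in; change (coneI (phi f - derivation g f)).
pose fd (d : 'I_(msize f)) := pihomog mdeg d f.
have f_sum : f = \sum_d fd d := pihomog_partitionE (leqnn _).
have fd_in d : coneI (fd d) by apply: coneI_pihomog.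
have -> : phi f - derivation g f = (phi (\sum_d fd d) - \sum_d phi (fd d)) +
    \sum_d (phi (fd d) - derivation g (fd d)).
  rewrite sumrB -f_sum addrA subrK; congr (_ - _).
  rewrite /derivation {1}f_sum; under eq_bigr do rewrite raddf_sum mulr_sumr.
  by rewrite exchange_big.
apply: coneID; first exact: coneI_phi_sum.
apply: big_ind => [|x y|d _]; [exact: coneI0 | exact: coneID |].
exact/g_der/pihomogP.
Qed.

Lemma coneI_phi_sub_derivation l g d f : hom_of_weight v l phi ->
  (forall j, g j \is l.+1.-homog) ->
  (forall i, phi_at v phi i f = (derivation g f).@[v i]) ->
  coneI f -> f \is d.-homog -> coneI (phi f - derivation g f).
Proof.
move=> phi_w g_homog phi_at_f f_in f_homog.
have [h [h_homog phi_h]] := phi_w d f f_in f_homog.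
have h_D : coneI (h - derivation g f).
  apply: (coneI_dhomog (d := (d + l)%N)).
    by rewrite rpredB // addnC dhomog_derivation.
  move=> i; rewrite mevalB -phi_at_f; apply/eqP.
  by rewrite subr_eq0 eq_sym -subr_eq0 -mevalB coneI_meval.
by have := coneID phi_h h_D; rewrite subrKA.
Qed.

End PositiveWeight.

Lemma T1_vanishes_pos (k : fieldType) (n N : nat) (v : 'I_N -> 'I_n -> k) l :
  [pchar k] =i pred0 -> (2 < N)%N -> (n < N)%N -> (forall i, exists r, v i r != 0) ->
  every_n_span v -> indep_on_quadrics_but_one v -> T1_vanishes v l.+1.
Proof.
move=> pchar0 N_gt2 n_lt_N v_neq0 v_span v_quad phi phi_hom phi_w.
have [r vr_neq0] := fin_all_exists v_neq0.
have [e e_prop] := fin_all_exists (fun i => point_indicator v_quad i N_gt2).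
pose c i := normal_coef v phi i (r i) (e i).
have [g [g_homog g_at]] := interpolant v_quad v_span c l n_lt_N v_neq0.
apply: (from_derivation_dhomog pchar0 phi_hom (g := g)) => d f f_in f_homog.
apply: (coneI_phi_sub_derivation phi_w g_homog _ f_in f_homog) => i.
have [e_homog e_at_i e_off_i] := e_prop i; have [mu g_at_i] := g_at i.
rewrite (phi_at_derivation phi_hom (vr_neq0 i) e_homog e_at_i e_off_i mu f_homog f_in).
by rewrite raddf_sum; apply: eq_bigr => j _; rewrite /= mevalM g_at_i.
Qed.

Theorem mainTheorem14 (k : closedFieldType) (Hchar : [pchar k] =i pred0)
  (n : nat) (Hn : (2 <= n)%N) (v : 'I_(2 * n) -> 'I_n -> k) :
  distinct_points v ->
  cone_Gorenstein v ->
  every_n_span v ->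
  indep_on_quadrics_but_one v ->
  forall l : nat, (0 < l)%N -> T1_vanishes v l.
Proof.
move=> [v_neq0 _] _ v_span v_quad [//|l] _.
by apply: T1_vanishes_pos => //; lia.
Qed.
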